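(* Let $P$ be a poset and $X$ an antichain of $P$. The following are equivalent: (i) $X$ is the minimum of $AM(P)$; (ii) $X$ is a minimal element of $AM(P)$; (iii) $P=\uparrow X$.
   Context: $AM(P)$ is the set of maximal antichains of $P$ ordered by domination: $Y\leq Z$ iff for every $y\in Y$ there is $z\in Z$ with $y\leq z$. $\uparrow X=\{y\in P: x\leq y\text{ for some }x\in X\}$. *)

From mathcomp Require Import all_boot all_order.
Set Implicit Arguments. Unset Strict Implicit. Unset Printing Implicit Defensive.
Import Order.TTheory.
Local Open Scope order_scope.

Section Defs.
Context {d : Order.disp_t} {T : porderType d}.

Definition antichain (X : T -> Prop) : Prop :=
  forall x y, X x -> X y -> x <= y -> x = y.

Definition max_antichain (X : T -> Prop) : Prop :=
  antichain X /\
  forall Y : T -> Prop, antichain Y -> (forall x, X x -> Y x) ->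
    (forall x, Y x -> X x).

(* Domination order on AM(P): Y <= Z iff every y in Y lies below some z in Z. *)
Definition dominated (Y Z : T -> Prop) : Prop :=
  forall y, Y y -> exists z, Z z /\ y <= z.

Definition upset (X : T -> Prop) : T -> Prop :=
  fun y => exists x, X x /\ x <= y.

Definition AM_minimum (X : T -> Prop) : Prop :=
  max_antichain X /\ forall Y, max_antichain Y -> dominated X Y.

Definition AM_minimal (X : T -> Prop) : Prop :=
  max_antichain X /\
  forall Y, max_antichain Y -> dominated Y X -> (forall x, Y x <-> X x).

End Defs.

From mathcomp Require Import all_boot all_order.
From mathcomp Require Import boolp classical_sets.
Set Implicit Arguments. Unset Strict Implicit. Unset Printing Implicit Defensive.
Import Order.TTheory.
Local Open Scope order_scope.

(* An antichain is maximal iff every point is comparable to one of its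
   elements.  If [P = up X], any maximal antichain [Y] dominates [X]: an
   [x] in [X] comparable to some [y] in [Y] with [y <= x] lies above an
   element of [X] below [y], hence [x = y].  Conversely, if some [p] is not
   in [up X], extend [p] together with the elements of [X] incomparable to
   [p] to a maximal antichain [Y] (Zorn); then [Y] is dominated by [X]
   without being equal to it, so [X] is not minimal.  Minimum implies
   minimal because domination is antisymmetric on antichains. *)

Section MaximalAntichains.
Context {d : Order.disp_t} {T : porderType d}.
Implicit Types (X Y Z : T -> Prop) (p : T).

Lemma max_antichainP X :
  antichain X -> max_antichain X <-> forall p, exists2 x, X x & x >=< p.
Proof.
move=> acX; split=> [[_ maxX] p | cmpX].
  apply: contrapT => /forall2NP incmp.
  have Xp : X p.
    apply: (maxX (fun t => X t \/ t = p)); [|by left|by right].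
    move=> s t [Xs|->] [Xt|->] st //; first exact: acX.
      by case: (incmp s) => // /negP; rewrite le_comparable.
    by case: (incmp t) => // /negP; rewrite ge_comparable.
  by case: (incmp p) => // /negP; rewrite comparablexx.
split=> // Y acY XY y Yy.
have [x Xx /orP[xy|yx]] := cmpX y; first by rewrite -(acY _ _ (XY _ Xx) Yy xy).
by rewrite (acY _ _ Yy (XY _ Xx) yx).
Qed.

Lemma antichain_extend Z :
  antichain Z -> exists2 Y, max_antichain Y & forall z, Z z -> Y z.
Proof.
(* Zorn is applied to the [A] with [Z \/ A] an antichain rather than to the
   antichains containing [Z], since the empty chain must have an upper bound. *)
move=> acZ; pose P A := antichain (fun t => Z t \/ A t).
have [|A [PA maxA]] := @Zorn_bigcup T P.
  move=> F FP Ftot x y [Zx|[B FB Bx]] [Zy|[C FC Cy]].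
  - exact: acZ.
  - by apply: (FP _ FC); [left|right].
  - by apply: (FP _ FB); [right|left].
  - have [BC|CB] := Ftot _ _ FB FC.
      by apply: (FP _ FC); right => //; apply: BC.
    by apply: (FP _ FB); right => //; apply: CB.
exists (fun t => Z t \/ A t); last by move=> z; left.
split=> // Y acY ZAY y Yy; apply: contrapT => ZAy.
apply: (maxA Y).
  by split=> [t At|AY]; [apply: ZAY; right|apply: ZAy; right; apply: AY].
by move=> s t [Zs|Ys] [Zt|Yt]; apply: acY => //; apply: ZAY; left.
Qed.

Lemma dominated_sub X Y :
  antichain X -> dominated X Y -> dominated Y X -> forall t, X t -> Y t.
Proof.
move=> acX dXY dYX t Xt.
have [y [Yy ty]] := dXY t Xt; have [x [Xx yx]] := dYX y Yy.
have tx : t = x by apply: acX => //; apply: le_trans yx.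
suff -> : t = y by [].
by apply/le_anti; rewrite ty tx yx.
Qed.

Lemma upset_full_max_antichain X :
  antichain X -> (forall p, upset X p) -> max_antichain X.
Proof.
move=> acX upX; apply/max_antichainP => // p.
by have [x [Xx xp]] := upX p; exists x; rewrite ?le_comparable.
Qed.

Lemma upset_full_dominated X Y :
  antichain X -> (forall p, upset X p) -> max_antichain Y -> dominated X Y.
Proof.
move=> acX upX maxY x Xx.
have [y Yy /orP[yx|xy]] := (max_antichainP maxY.1).1 maxY x; last by exists y.
have [x' [Xx' x'y]] := upX y.
have x'x : x' = x by apply: acX => //; apply: le_trans yx.
by exists y; rewrite -x'x.
Qed.

Lemma AM_minimal_upset_full X :
  antichain X -> AM_minimal X -> forall p, upset X p.
Proof.
move=> acX [maxX minX] p; apply: contrapT => notup.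
have below_p x : X x -> ~ x <= p by move=> Xx xp; apply: notup; exists x.
pose Z t := t = p \/ X t /\ ~~ (t >=< p).
have acZ : antichain Z.
  move=> s t [->|[Xs ncs]] [->|[Xt nct]] st //.
  - by move: nct; rewrite comparable_sym le_comparable.
  - by move: ncs; rewrite le_comparable.
  - exact: acX.
have [Y maxY ZY] := antichain_extend acZ.
have Yp : Y p by apply: ZY; left.
have dYX : dominated Y X.
  move=> y Yy; have [x Xx /orP[xy|yx]] := (max_antichainP acX).1 maxX y;
    last by exists x.
  case: (boolP (x >=< p)) => [/orP[xp|px] | ncx]; first by case: (below_p x).
    have py := maxY.1 _ _ Yp Yy (le_trans px xy).
    by case: (below_p x Xx); rewrite py.
  have exy := maxY.1 _ _ (ZY _ (or_intror _ (conj Xx ncx))) Yy xy.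
  by exists x; split; last rewrite exy.
by apply: notup; exists p; split => //; exact: (minX Y maxY dYX p).1.
Qed.

Lemma AM_minimum_minimal X : AM_minimum X -> AM_minimal X.
Proof.
move=> [maxX dX]; split=> // Y maxY dYX t; split.
  exact: (dominated_sub maxY.1 dYX (dX Y maxY)).
exact: (dominated_sub maxX.1 (dX Y maxY) dYX).
Qed.

Lemma upset_full_AM_minimum X :
  antichain X -> (forall p, upset X p) -> AM_minimum X.
Proof.
move=> acX upX; split=> [|Y]; first exact: upset_full_max_antichain.
exact: upset_full_dominated.
Qed.

End MaximalAntichains.

Theorem lemma5p1 (d : Order.disp_t) (T : porderType d) (X : T -> Prop) :
  antichain X ->
  (AM_minimum X <-> AM_minimal X) /\
  (AM_minimal X <-> (forall p : T, upset X p)).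
Proof.
move=> acX; split; split.
- exact: AM_minimum_minimal.
- by move/(AM_minimal_upset_full acX)/(upset_full_AM_minimum acX).
- exact: AM_minimal_upset_full.
- by move/(upset_full_AM_minimum acX)/AM_minimum_minimal.
Qed.
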